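(* Let $\mathcal C$ be a clique of $\Gamma$ with $|\mathcal C|\ge 4$ which contains a linear $3$-clique (three elliptic ovoids belonging to a common rosette). Then $\mathcal C$ is a linear clique. In particular, a linear clique and a non-linear clique of $\Gamma$ share at most two vertices.
   Context: Let $q=2^n$ and let $Q_0\cong Q(4,q)$ be the parabolic quadric generalized quadrangle in $\mathrm{PG}(4,q)$. An elliptic ovoid of $Q_0$ is a set $X=S\cap Q_0$ where $S$ is a $3$-dimensional projective subspace meeting $Q_0$ in an elliptic quadric $Q^-(3,q)$. Two distinct elliptic ovoids meet in one point (then they are tangent) or in a conic. A rosette based at $p\in Q_0$ is a set of $q$ elliptic ovoids pairwise meeting exactly in $\{p\}$. $\Gamma$ is the graph whose vertices are the elliptic ovoids of $Q_0$, adjacent iff distinct and tangent. A clique of $\Gamma$ is linear if it is contained in some rosette (i.e. all its members pairwise meet in the same point), and non-linear otherwise. *)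

From HB Require Import structures.
From mathcomp Require Import all_boot all_order all_algebra all_field.
Set Implicit Arguments. Unset Strict Implicit. Unset Printing Implicit Defensive.
Import GRing.Theory.
Local Open Scope ring_scope.

Section Q4q.
Variable F : finFieldType.

(* Vectors of F^5 represent points of PG(4,q) (nonzero, up to scalars). *)
Definition Qf (x : 'rV[F]_5) : F :=
  x 0 (inord 0) * x 0 (inord 1) + x 0 (inord 2) * x 0 (inord 3) + x 0 (inord 4) ^+ 2.

Definition ppoint (p : 'rV[F]_5) : {set 'rV[F]_5} :=
  [set x | (x != 0) && [exists k : F, x == k *: p]].

(* The hyperplane S = ker a meets Q0 in an elliptic quadric Q^-(3,q):
   the restriction of Qf to S is, in a suitable basis of S and up to a
   nonzero scalar, the standard elliptic form v0 v1 + v2^2 + c v2 v3 + d v3^2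
   with t^2 + c t + d irreducible over F. *)
Definition elliptic_section (a : 'rV[F]_5) : Prop :=
  exists M : 'M[F]_(4, 5),
    [/\ row_free M, M *m a^T = 0 &
    exists lam c d : F, [/\ lam != 0, (forall t : F, t ^+ 2 + c * t + d != 0) &
      forall v : 'rV[F]_4,
        Qf (v *m M) = lam * (v 0 (inord 0) * v 0 (inord 1) + v 0 (inord 2) ^+ 2
                             + c * v 0 (inord 2) * v 0 (inord 3) + d * v 0 (inord 3) ^+ 2)]].

Definition section (a : 'rV[F]_5) : {set 'rV[F]_5} :=
  [set x | [&& x != 0, Qf x == 0 & (x *m a^T) 0 0 == 0]].

Definition elliptic_ovoid (X : {set 'rV[F]_5}) : Prop :=
  exists a : 'rV[F]_5, [/\ a != 0, elliptic_section a & X = section a].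

(* Adjacency in Gamma: distinct and tangent (meeting in exactly one point). *)
Definition tangent (X Y : {set 'rV[F]_5}) : Prop :=
  X != Y /\ exists p : 'rV[F]_5, p != 0 /\ X :&: Y = ppoint p.

Definition clique (C : {set {set 'rV[F]_5}}) : Prop :=
  (forall X, X \in C -> elliptic_ovoid X) /\
  (forall X Y, X \in C -> Y \in C -> X != Y -> tangent X Y).

Definition linear_clique (C : {set {set 'rV[F]_5}}) : Prop :=
  clique C /\ exists p : 'rV[F]_5, p != 0 /\
    (forall X Y, X \in C -> Y \in C -> X != Y -> X :&: Y = ppoint p).

End Q4q.

From HB Require Import structures.
From mathcomp Require Import all_boot all_order all_algebra all_field.
From mathcomp Require Import ring zify.
Set Implicit Arguments. Unset Strict Implicit. Unset Printing Implicit Defensive.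
Import GRing.Theory.
Local Open Scope ring_scope.

(* In characteristic 2 the quadric x0 x1 + x2 x3 + x4^2 has a nucleus, the point
   e4 at which its polar form vanishes identically, and no elliptic solid passes
   through it; so every elliptic ovoid is cut out by a solid x4 = a.x with a acting
   on the first four coordinates.  Two such solids a, b that are tangent meet Q0
   only in the point t(a, b) of their common plane whose polar hyperplane contains
   that plane; its first four coordinates are linear in a + b.  Let X1, X2, X3 touch
   pairwise at p and let Y = S_m touch all three.  Then t(a1, a_i) = k_i p with
   k2 <> k3 nonzero, hence t(a_i, m) = t(a1, m) + k_i p', where p' is the
   projection of p from the nucleus into S_m.  All three points lie on Q0, so
   k^2 Q(p') + k polar(t(a1, m), p') vanishes at k2 and k3, forcing
   polar(t(a1, m), p') = 0, which says exactly that p lies in S_m.  Hence every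
   member of a clique containing a linear 3-clique passes through its common
   point. *)

Local Notation "x `[ i ]" := (x 0 (inord i)) (at level 2, format "x `[ i ]").

Lemma lin_coef_eq0_of_two_roots (F : fieldType) (A B k1 k2 : F) :
  k1 != 0 -> k2 != 0 -> k1 != k2 ->
  k1 ^+ 2 * A + k1 * B = 0 -> k2 ^+ 2 * A + k2 * B = 0 -> B = 0.
Proof.
have divk k : k != 0 -> k ^+ 2 * A + k * B = 0 -> k * A + B = 0.
  move=> kn0; have -> : k ^+ 2 * A + k * B = k * (k * A + B) by ring.
  by move/eqP; rewrite mulf_eq0 (negbTE kn0) => /eqP.
move=> /divk e1 /divk e2 k12 /e1 {}e1 /e2 {}e2.
have : (k1 - k2) * A = (k1 * A + B) - (k2 * A + B) by ring.
rewrite e1 e2 subrr => /eqP; rewrite mulf_eq0 subr_eq0 (negbTE k12) => /eqP A0.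
by rewrite A0 mulr0 add0r in e1.
Qed.

Lemma three_distinct (T : finType) (A : {set T}) : (2 < #|A|)%N ->
  exists x1 x2 x3, [/\ x1 \in A, x2 \in A & x3 \in A] /\ [/\ x1 != x2, x1 != x3 & x2 != x3].
Proof.
move=> hA; have /card_gt0P[x1 h1] : (0 < #|A|)%N by apply: leq_ltn_trans hA.
have hA1 : (1 < #|A :\ x1|)%N by move: hA; rewrite (cardsD1 x1) h1.
have /card_gt0P[x2 h2] : (0 < #|A :\ x1|)%N by apply: leq_ltn_trans hA1.
have /card_gt0P[x3 h3] : (0 < #|A :\ x1 :\ x2|)%N by move: hA1; rewrite (cardsD1 x2) h2.
move: h2 h3; rewrite !in_setD1 => /andP[n21 i2] /and3P[n32 n31 i3].
by exists x1, x2, x3; rewrite h1 i2 i3 ![x1 == _]eq_sym n21 n31 eq_sym n32.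
Qed.

Lemma ppoint_id (F : finFieldType) (p : 'rV[F]_5) : p != 0 -> p \in ppoint p.
Proof. by move=> pn0; rewrite inE pn0; apply/existsP; exists 1; rewrite scale1r. Qed.

Lemma ppoint_eq (F : finFieldType) (p r : 'rV[F]_5) : p \in ppoint r -> ppoint p = ppoint r.
Proof.
rewrite inE => /andP[pn0 /existsP[k /eqP pk]].
have kn0 : k != 0 by apply: contraNneq pn0 => k0; rewrite pk k0 scale0r.
apply/setP => x; rewrite !inE; case: (x != 0) => //=.
apply/existsP/existsP => -[j /eqP ->].
- by exists (j * k); rewrite pk scalerA.
- by exists (j / k); rewrite pk scalerA divfK.
Qed.

Lemma sum_ord5 (R : nmodType) (f : 'I_5 -> R) :
  \sum_(i < 5) f i = f (inord 0) + f (inord 1) + f (inord 2) + f (inord 3) + f (inord 4).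
Proof.
rewrite !big_ord_recr big_ord0 /= add0r.
by congr (_ + _ + _ + _ + _); congr f; apply: val_inj; rewrite /= inordK.
Qed.

Section Char2.
Variable F : finFieldType.
Hypothesis charF2 : 2 \in [pchar F].
Let two0 : 2 = 0 :> F. Proof. exact: pcharf0 charF2. Qed.
Implicit Types (a b m p x y : 'rV[F]_5) (k : F).

Lemma sqr_surj_pchar2 (z : F) : exists s, s ^+ 2 = z.
Proof.
have sqr_inj : injective (fun s : F => s ^+ 2).
  move=> x y /= exy; apply/eqP; rewrite -subr_eq0 -sqrf_eq0 (oppr_pchar2 charF2).
  have -> : (x + y) ^+ 2 = x ^+ 2 + y ^+ 2 by ring: two0.
  by rewrite exy addrr_pchar2.
by have /codomP[s ->] := injF_onto sqr_inj z; exists s.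
Qed.

Definition vec5 (c0 c1 c2 c3 c4 : F) : 'rV[F]_5 :=
  \row_(i < 5) nth 0 [:: c0; c1; c2; c3; c4] i.

Lemma vec5E c0 c1 c2 c3 c4 i : (i < 5)%N ->
  (vec5 c0 c1 c2 c3 c4)`[i] = nth 0 [:: c0; c1; c2; c3; c4] i.
Proof. by move=> i5; rewrite mxE inordK. Qed.

Lemma row5P (x y : 'rV[F]_5) : (forall i, (i < 5)%N -> x`[i] = y`[i]) -> x = y.
Proof.
move=> exy; apply/rowP => j; have := exy _ (ltn_ord j).
by rewrite (_ : inord j = j) //; apply: val_inj; rewrite /= inordK.
Qed.

Lemma coordD x y i : (x + y)`[i] = x`[i] + y`[i].
Proof. by rewrite mxE. Qed.

Lemma coordZ k x i : (k *: x)`[i] = k * x`[i].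
Proof. by rewrite mxE. Qed.

Definition nucleus := vec5 0 0 0 0 1.

Definition polar (x y : 'rV[F]_5) : F :=
  x`[0] * y`[1] + x`[1] * y`[0] + x`[2] * y`[3] + x`[3] * y`[2].

Definition dot4 (a x : 'rV[F]_5) : F :=
  a`[0] * x`[0] + a`[1] * x`[1] + a`[2] * x`[2] + a`[3] * x`[3].

Lemma QfD x y : Qf (x + y) = Qf x + Qf y + polar x y.
Proof. by rewrite /Qf /polar !mxE; ring: two0. Qed.

Lemma QfZ k x : Qf (k *: x) = k ^+ 2 * Qf x.
Proof. by rewrite /Qf !mxE; ring. Qed.

Lemma polarC x y : polar x y = polar y x.
Proof. by rewrite /polar; ring. Qed.

Lemma polarxx x : polar x x = 0.
Proof. by rewrite /polar; ring: two0. Qed.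

Lemma polarDr x y z : polar x (y + z) = polar x y + polar x z.
Proof. by rewrite /polar !mxE; ring. Qed.

Lemma polarZr x k y : polar x (k *: y) = k * polar x y.
Proof. by rewrite /polar !mxE; ring. Qed.

Lemma polar_nucleus x : polar x nucleus = 0.
Proof. by rewrite /polar !vec5E //=; ring. Qed.

Lemma Qf_nucleus : Qf nucleus = 1.
Proof. by rewrite /Qf !vec5E //=; ring. Qed.

Lemma nucleus_neq0 : nucleus != 0.
Proof.
by apply/eqP => /(congr1 (fun x => x`[4])); rewrite vec5E // mxE => /eqP; rewrite oner_eq0.
Qed.

Lemma dotE a x : (x *m a^T) 0 0 = dot4 a x + a`[4] * x`[4].
Proof. by rewrite mxE sum_ord5 !mxE /dot4; ring. Qed.

Lemma hyperplaneE a x : a`[4] = 1 -> ((x *m a^T) 0 0 == 0) = (x`[4] == dot4 a x).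
Proof. by move=> a4; rewrite dotE a4 mul1r addr_eq0 (oppr_pchar2 charF2) eq_sym. Qed.

Lemma sectionE a x : a`[4] = 1 ->
  (x \in section a) = [&& x != 0, Qf x == 0 & x`[4] == dot4 a x].
Proof. by move=> a4; rewrite inE hyperplaneE. Qed.

Lemma sectionZ k a : k != 0 -> section (k *: a) = section a.
Proof.
move=> kn0; apply/setP => x; rewrite !inE !dotE /dot4 !mxE.
have -> : k * a`[0] * x`[0] + k * a`[1] * x`[1] + k * a`[2] * x`[2] + k * a`[3] * x`[3]
    + k * a`[4] * x`[4] = k * (dot4 a x + a`[4] * x`[4]) by rewrite /dot4; ring.
by rewrite mulf_eq0 (negbTE kn0).
Qed.

Definition ellform (c d : F) (v : 'rV[F]_4) : F :=
  v`[0] * v`[1] + v`[2] ^+ 2 + c * v`[2] * v`[3] + d * v`[3] ^+ 2.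

Definition unit4 (j : nat) : 'rV[F]_4 := \row_(i < 4) (i == j :> nat)%:R.

Lemma unit4E i j : (i < 4)%N -> (unit4 j)`[i] = (i == j)%:R.
Proof. by move=> i4; rewrite mxE inordK. Qed.

Lemma ellform_additive_eq0 c d (v : 'rV[F]_4) : c != 0 ->
  (forall w, ellform c d (v + w) = ellform c d v + ellform c d w) -> v = 0.
Proof.
move=> c0 hadd.
have polar0 (w : 'rV[F]_4) :
    v`[0] * w`[1] + v`[1] * w`[0] + c * (v`[2] * w`[3] + v`[3] * w`[2]) = 0.
  rewrite -(addrr_pchar2 charF2 (ellform c d (v + w))) {2}hadd /ellform !mxE.
  by ring: two0.
apply/rowP => j; rewrite mxE (_ : j = inord j); last by apply: val_inj; rewrite /= inordK.
case: j => -[|[|[|[|//]]]] _ /=.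
- by have := polar0 (unit4 1); rewrite !unit4E //= !(mulr1, mulr0, addr0, add0r).
- by have := polar0 (unit4 0); rewrite !unit4E //= !(mulr1, mulr0, addr0, add0r).
- have := polar0 (unit4 3); rewrite !unit4E //= !(mulr1, mulr0, addr0, add0r).
  by move/eqP; rewrite mulf_eq0 (negbTE c0) => /eqP.
- have := polar0 (unit4 2); rewrite !unit4E //= !(mulr1, mulr0, addr0, add0r).
  by move/eqP; rewrite mulf_eq0 (negbTE c0) => /eqP.
Qed.

(* The nucleus lies in no elliptic solid. *)
Lemma elliptic_section_coord4 a : a != 0 -> elliptic_section a -> a`[4] != 0.
Proof.
move=> an0 [M [freeM Ma [lam [c [d [lam0 irr QfM]]]]]].
have c0 : c != 0.
  have [s sd] := sqr_surj_pchar2 d.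
  by apply: contraNneq (irr s) => ->; rewrite mul0r addr0 sd addrr_pchar2.
apply/negP => /eqP a4.
have nucM : (nucleus <= M)%MS.
  have Mker : (M <= kermx a^T)%MS by apply/sub_kermxP.
  have [_ eqM] := mxrank_leqif_sup Mker.
  apply: submx_trans (_ : kermx a^T <= M)%MS.
    by apply/sub_kermxP/rowP => i; rewrite ord1 dotE a4 /dot4 !vec5E //= mxE; ring.
  by rewrite -eqM mxrank_ker mxrank_tr rank_rV an0 (eqP freeM).
case/submxP: nucM => v nucE.
have QfE w : lam * ellform c d w = Qf (w *m M) by rewrite QfM.
suff v0 : v = 0 by move: nucleus_neq0; rewrite nucE v0 mul0mx eqxx.
apply: (ellform_additive_eq0 (d := d) c0) => w; apply: (mulfI lam0).
rewrite QfE mulrDr !QfE.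
by rewrite mulmxDl -nucE QfD polarC polar_nucleus Qf_nucleus addr0.
Qed.

Lemma elliptic_ovoid_normal X :
  elliptic_ovoid X -> exists2 a : 'rV[F]_5, a`[4] = 1 & X = section a.
Proof.
case=> a [an0 ell ->]; have a4 := elliptic_section_coord4 an0 ell.
exists (a`[4]^-1 *: a); first by rewrite mxE mulVf.
by rewrite sectionZ // invr_neq0.
Qed.

(* The point y of the plane S_a :&: S_b with polar y = dot4 a + dot4 b; when
   section a and section b are tangent, it is their common point. *)
Definition tangent_point a b : 'rV[F]_5 :=
  let s := a + b in vec5 s`[1] s`[0] s`[3] s`[2] (polar a b).

Lemma tangent_point_polar a b x : polar (tangent_point a b) x = dot4 a x + dot4 b x.
Proof. by rewrite /polar /dot4 !vec5E //= !mxE; ring. Qed.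

Lemma tangent_point4 a b : let y := tangent_point a b in
  y`[4] = dot4 a y /\ y`[4] = dot4 b y.
Proof. by rewrite /= /dot4 !vec5E //= /polar !mxE; split; ring: two0. Qed.

Lemma tangent_point_hyperplane a b : a`[4] = 1 -> b`[4] = 1 ->
  (tangent_point a b *m a^T) 0 0 = 0 /\ (tangent_point a b *m b^T) 0 0 = 0.
Proof.
move=> a4 b4; have [ya yb] := tangent_point4 a b.
by rewrite !dotE a4 b4 mul1r -ya -yb !addrr_pchar2.
Qed.

Lemma tangent_pointxx a : tangent_point a a = 0.
Proof.
by apply: row5P => -[|[|[|[|[|//]]]]] _; rewrite vec5E //= ?polarxx !mxE ?addrr_pchar2.
Qed.

Lemma tangent_point_inj (a b c : 'rV[F]_5) :
  b`[4] = c`[4] -> tangent_point a b = tangent_point a c -> b = c.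
Proof.
move=> bc4 e; have e_ j : (tangent_point a b)`[j] = (tangent_point a c)`[j] by rewrite e.
apply: row5P => -[|[|[|[|[|//]]]]] _ //.
- by have := e_ 1%N; rewrite !vec5E //= !mxE => /addrI.
- by have := e_ 0%N; rewrite !vec5E //= !mxE => /addrI.
- by have := e_ 3%N; rewrite !vec5E //= !mxE => /addrI.
- by have := e_ 2%N; rewrite !vec5E //= !mxE => /addrI.
Qed.

(* Projection from the nucleus onto the solid x4 = dot4 m x. *)
Definition nucleus_proj m x := x + (x`[4] + dot4 m x) *: nucleus.

Lemma nucleus_projZ m k x : nucleus_proj m (k *: x) = k *: nucleus_proj m x.
Proof.
rewrite /nucleus_proj scalerDr scalerA; congr (_ + _ *: _).
by rewrite /dot4 !mxE; ring.
Qed.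

Lemma polar_nucleus_proj x m y : polar x (nucleus_proj m y) = polar x y.
Proof. by rewrite polarDr polarZr polar_nucleus mulr0 addr0. Qed.

Lemma tangent_pointD (a a1 m : 'rV[F]_5) :
  tangent_point a m = tangent_point a1 m + nucleus_proj m (tangent_point a1 a).
Proof.
apply: row5P => -[|[|[|[|[|//]]]]] _;
  by rewrite !coordD coordZ /dot4 !vec5E //= !coordD /polar; ring: two0.
Qed.

Lemma tangent_point_on_quadric a b p : a`[4] = 1 -> b`[4] = 1 ->
  section a :&: section b = ppoint p -> Qf (tangent_point a b) = 0.
Proof.
(* Otherwise every x of the plane is polar to y, so x + t y with t^2 = Qf x / Qf y
   lies on Q0; taking x off the line <p, y> gives a second common point. *)
move=> a4 b4 meet; set y := tangent_point a b.
have [//|Qy] := eqVneq (Qf y) 0; exfalso.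
have [ya yb] := @tangent_point_hyperplane a b a4 b4; rewrite -/y in ya yb.
pose A := row_mx a^T b^T.
have [x xA x_py] : exists2 x : 'rV[F]_5, x *m A = 0 & ~~ (x <= p + y)%MS.
  have : ~~ (kermx A <= p + y)%MS.
    apply/negP => /mxrankS; rewrite mxrank_ker.
    have := (mxrank_adds_leqif p y).1; have := rank_leq_col A.
    have := rank_leq_row p; have := rank_leq_row y; lia.
  by case/row_subPn => i Ki; exists (row i (kermx A)); rewrite // -row_mul mulmx_ker row0.
have [xa xb] : (x *m a^T) 0 0 = 0 /\ (x *m b^T) 0 0 = 0.
  move: xA; rewrite mul_mx_row => /eqP; rewrite row_mx_eq0 => /andP[/eqP -> /eqP ->].
  by rewrite mxE.
have yx : polar y x = 0.
  rewrite tangent_point_polar.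
  transitivity ((dot4 a x + 1 * x`[4]) + (dot4 b x + 1 * x`[4])); first by ring: two0.
  by rewrite -{1}a4 -b4 -!dotE xa xb addr0.
have [t tE] := sqr_surj_pchar2 (Qf x / Qf y).
pose z := x + t *: y.
have [k zk] : exists k, z = k *: p.
  have Qz : Qf z = 0.
    by rewrite QfD QfZ tE divfK // polarZr polarC yx mulr0 addr0 addrr_pchar2.
  have [->|zn0] := eqVneq z 0; first by exists 0; rewrite scale0r.
  have : z \in section a :&: section b.
    rewrite !inE zn0 Qz !mulmxDl -!scalemxAl.
    rewrite ![(_ + _ : 'M_1) 0 0]mxE ![(_ *: _ : 'M_1) 0 0]mxE.
    by rewrite xa xb ya yb mulr0 addr0 !eqxx.
  by rewrite meet inE => /andP[_ /existsP[k /eqP ->]]; exists k.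
apply: (negP x_py); rewrite (_ : x = k *: p + (- t) *: y); last by rewrite -zk scaleNr addrK.
by apply: addmx_sub_adds; apply: scalemx_sub.
Qed.

Lemma tangent_point_section a b p : a`[4] = 1 -> b`[4] = 1 -> a != b ->
  section a :&: section b = ppoint p -> tangent_point a b \in section a :&: section b.
Proof.
move=> a4 b4 ab meet; have [ya yb] := @tangent_point_hyperplane a b a4 b4.
have yn0 : tangent_point a b != 0.
  rewrite -(tangent_pointxx a); apply: contra_neq ab => e.
  by apply/esym/(tangent_point_inj _ e); rewrite a4 b4.
by rewrite !inE yn0 (tangent_point_on_quadric a4 b4 meet) ya yb eqxx.
Qed.

Lemma rosette_tangent (a1 a2 a3 m p r1 r2 r3 : 'rV[F]_5) :
  a1`[4] = 1 -> a2`[4] = 1 -> a3`[4] = 1 -> m`[4] = 1 -> p != 0 ->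
  a1 != a2 -> a1 != a3 -> a2 != a3 ->
  section a1 :&: section a2 = ppoint p -> section a1 :&: section a3 = ppoint p ->
  section a1 :&: section m = ppoint r1 -> section a2 :&: section m = ppoint r2 ->
  section a3 :&: section m = ppoint r3 -> p \in section m.
Proof.
move=> a14 a24 a34 m4 pn0 a12 a13 a23 meet2 meet3 meet1m meet2m meet3m.
have pa1 : p \in section a1 by move: (ppoint_id pn0); rewrite -meet2 inE => /andP[].
have tangent_scale a : a`[4] = 1 -> a1 != a -> section a1 :&: section a = ppoint p ->
    exists2 k, k != 0 & tangent_point a1 a = k *: p.
  move=> a4 a1a meet; have := tangent_point_section a14 a4 a1a meet.
  rewrite meet inE => /andP[yn0 /existsP[k /eqP yk]]; exists k => //.
  by apply: contraNneq yn0 => k0; rewrite yk k0 scale0r.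
have [k2 k2n0 t12] := tangent_scale _ a24 a12 meet2.
have [k3 k3n0 t13] := tangent_scale _ a34 a13 meet3.
have k23 : k2 != k3.
  apply: contra_neq a23 => k23; apply: (tangent_point_inj (a := a1)).
    by rewrite a24 a34.
  by rewrite t12 t13 k23.
set t := tangent_point a1 m; set pm := nucleus_proj m p.
have shift_root a k r : a`[4] = 1 -> section a :&: section m = ppoint r ->
    tangent_point a1 a = k *: p -> k ^+ 2 * Qf pm + k * polar t pm = 0.
  move=> a4 meet tk; have := tangent_point_on_quadric a4 m4 meet.
  rewrite (tangent_pointD a a1) tk nucleus_projZ QfD QfZ polarZr -/t.
  by rewrite (tangent_point_on_quadric a14 m4 meet1m) add0r.
have := lin_coef_eq0_of_two_roots k2n0 k3n0 k23 (shift_root _ _ _ a24 meet2m t12)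
  (shift_root _ _ _ a34 meet3m t13).
rewrite polar_nucleus_proj tangent_point_polar => e.
move: pa1; rewrite !sectionE // => /and3P[-> -> /eqP ->] /=.
by rewrite -[dot4 m p](oppr_pchar2 charF2) -addr_eq0 e.
Qed.

Lemma rosette_ovoid (X1 X2 X3 Y : {set 'rV[F]_5}) p :
  elliptic_ovoid X1 -> elliptic_ovoid X2 -> elliptic_ovoid X3 -> elliptic_ovoid Y ->
  p != 0 -> X1 != X2 -> X1 != X3 -> X2 != X3 ->
  X1 :&: X2 = ppoint p -> X1 :&: X3 = ppoint p ->
  tangent X1 Y -> tangent X2 Y -> tangent X3 Y -> p \in Y.
Proof.
move=> /elliptic_ovoid_normal[a1 a14 ->] /elliptic_ovoid_normal[a2 a24 ->].
move=> /elliptic_ovoid_normal[a3 a34 ->] /elliptic_ovoid_normal[m m4 ->].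
move=> pn0 X12 X13 X23 meet2 meet3 [_ [r1 [_ t1]]] [_ [r2 [_ t2]]] [_ [r3 [_ t3]]].
by apply: (rosette_tangent a14 a24 a34 m4 pn0 _ _ _ meet2 meet3 t1 t2 t3);
  [move: X12 | move: X13 | move: X23]; apply: contraNneq => ->.
Qed.

Lemma clique_rosette_linear (C : {set {set 'rV[F]_5}}) (X1 X2 X3 : {set 'rV[F]_5}) p :
  clique C -> X1 \in C -> X2 \in C -> X3 \in C -> X1 != X2 -> X1 != X3 -> X2 != X3 ->
  p != 0 -> X1 :&: X2 = ppoint p -> X1 :&: X3 = ppoint p -> linear_clique C.
Proof.
move=> [ovC tanC] C1 C2 C3 X12 X13 X23 pn0 meet2 meet3.
have pC X : X \in C -> p \in X.
  have pp := ppoint_id pn0; move=> CX.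
  have [->|X1X] := eqVneq X X1; first by move: pp; rewrite -meet2 inE => /andP[].
  have [->|X2X] := eqVneq X X2; first by move: pp; rewrite -meet2 inE => /andP[].
  have [->|X3X] := eqVneq X X3; first by move: pp; rewrite -meet3 inE => /andP[].
  apply: (rosette_ovoid (ovC _ C1) (ovC _ C2) (ovC _ C3) (ovC _ CX) pn0 X12 X13 X23);
    by [|apply: tanC; rewrite // eq_sym].
split=> //; exists p; split=> // X Y CX CY XY.
have [_ [r [_ meet]]] := tanC _ _ CX CY XY.
by rewrite meet (@ppoint_eq _ p r) // -meet inE !pC.
Qed.

End Char2.

Theorem proposition3p2 (F : finFieldType) (n : nat) (hq : #|F| = (2 ^ n)%N) :
  (forall C : {set {set 'rV[F]_5}},
     clique C -> (4 <= #|C|)%N ->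
     (exists T : {set {set 'rV[F]_5}}, [/\ T \subset C, #|T| = 3%N & linear_clique T]) ->
     linear_clique C) /\
  (forall C1 C2 : {set {set 'rV[F]_5}},
     linear_clique C1 -> clique C2 -> ~ linear_clique C2 ->
     (#|C1 :&: C2| <= 2)%N).
Proof.
have charF2 : 2 \in [pchar F] := card_finPcharP hq (isT : prime 2).
split.
-
  move=> C cliqueC _ [T [TC cardT [_ [p [pn0 Tp]]]]].
  have [|X1 [X2 [X3 [[T1 T2 T3] [X12 X13 X23]]]]] := @three_distinct _ T.
    by rewrite cardT.
  exact: (clique_rosette_linear charF2 cliqueC (subsetP TC _ T1) (subsetP TC _ T2)
    (subsetP TC _ T3) X12 X13 X23 pn0 (Tp _ _ T1 T2 X12) (Tp _ _ T1 T3 X13)).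
- move=> C1 C2 [_ [p [pn0 C1p]]] cliqueC2 nonlinC2; rewrite leqNgt; apply/negP.
  move=> /three_distinct[X1 [X2 [X3 [[] ]]]].
  rewrite !inE => /andP[X1C1 X1C2] /andP[X2C1 X2C2] /andP[X3C1 X3C2] [X12 X13 X23].
  exact: nonlinC2 (clique_rosette_linear charF2 cliqueC2 X1C2 X2C2 X3C2 X12 X13 X23 pn0
    (C1p _ _ X1C1 X2C1 X12) (C1p _ _ X1C1 X3C1 X13)).
Qed.
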